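(* Let $E$ be a finite directed graph and let $A$ be either the path algebra $KE$ or the Leavitt path algebra $L_K(E)$, each with its standard filtration. Then $A$ belongs to exactly one of the following classes: Class 0 ($A$ is finite-dimensional); Class 1 ($A$ is infinite-dimensional with $\mathrm{GKdim}(A)<\infty$); Class 2 ($\mathrm{GKdim}(A)=\infty$ and $\mathrm{h}_{\mathrm{alg}}(A)<\infty$). In particular $\mathrm{h}_{\mathrm{alg}}(A)<\infty$.
   Context: A finite directed graph $E=(E^0,E^1,s,r)$ has finitely many vertices and edges, with source and range maps $s,r:E^1\to E^0$. Paths are finite sequences $e_1\cdots e_n$ of edges with $r(e_i)=s(e_{i+1})$; vertices are paths of length $0$. The path algebra $KE$ over a field $K$ has basis all paths with concatenation product (zero when not composable); its standard filtration $V_n$ is the span of paths of length $\le n$. The Leavitt path algebra $L_K(E)$ is the $K$-algebra generated by $E^0\cup E^1\cup\{e^*:e\in E^1\}$ subject to: $vw=\delta_{v,w}v$ for vertices; $s(e)e=e=er(e)$ and $r(e)e^*=e^*=e^*s(e)$; $e^*f=\delta_{e,f}r(e)$ for $e,f\in E^1$; $\sum_{s(e)=v}ee^*=v$ for every vertex $v$ with $0<|s^{-1}(v)|<\infty$. Its standard filtration $W_n$ is the span of elements $\lambda\mu^*$ with $\lambda,\mu$ paths and $l(\lambda)+l(\mu)\le n$. For a filtration $\{V_n\}$ of an algebra $A$, $\mathrm{h}_{\mathrm{alg}}(A)=0$ if $A$ is finite-dimensional and $\limsup_n\frac1n\log\dim(V_n/V_{n-1})$ otherwise. The Gelfand–Kirillov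 dimension is $\mathrm{GKdim}(A)=\limsup_{n\to\infty}\log\dim(V^n)/\log n$, where $V$ is any finite-dimensional generating subspace and $V^n$ is the span of products of at most $n$ elements of $V$. *)

From HB Require Import structures.
From mathcomp Require Import all_boot all_order all_algebra.
From mathcomp Require Import boolp reals ereal exp sequences.
Set Implicit Arguments. Unset Strict Implicit. Unset Printing Implicit Defensive.
Import Order.TTheory GRing.Theory Num.Theory.
Local Open Scope ring_scope.

Section LinAlg.
Variables (K : fieldType) (A : lmodType K).

Definition free_seq (l : seq A) : Prop :=
  forall c : nat -> K, \sum_(i < size l) c i *: l`_i = 0 ->
    forall i, (i < size l)%N -> c i = 0.

Definition in_span (l : seq A) (a : A) : Prop :=
  exists c : nat -> K, a = \sum_(i < size l) c i *: l`_i.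

Definition dimspan (l : seq A) : nat :=
  \max_(d < (size l).+1 | `[< exists t, subseq t l /\ size t = d /\ free_seq t >]) d.

Definition fin_dim : Prop := exists l : seq A, forall a : A, in_span l a.

Definition is_alg (mul : A -> A -> A) : Prop :=
  [/\ forall x y z, mul x (mul y z) = mul (mul x y) z,
      forall x y z, mul (x + y) z = mul x z + mul y z,
      forall x y z, mul x (y + z) = mul x y + mul x z,
      forall k x y, mul (k *: x) y = k *: mul x y
    & forall k x y, mul x (k *: y) = k *: mul x y].

Definition mprod (mul : A -> A -> A) (d : A) (l : seq A) : A :=
  if l is x :: l' then foldl mul x l' else d.

End LinAlg.

Definition alg_hom (K : fieldType) (A B : lmodType K)
  (mulA : A -> A -> A) (mulB : B -> B -> B) (f : A -> B) : Prop :=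
  (forall k x y, f (k *: x + y) = k *: f x + f y) /\
  (forall x y, f (mulA x y) = mulB (f x) (f y)).

Section Growth.
Variables (R : realType) (K : fieldType) (A : lmodType K) (mul : A -> A -> A).
Local Open Scope ereal_scope.

(* products of (k+1) elements of gens *)
Fixpoint prods (gens : seq A) (k : nat) : seq A :=
  match k with
  | 0 => gens
  | k'.+1 => [seq mul x y | x <- gens, y <- prods gens k']
  end.

(* spanning list of V^n : products of at most n (and at least 1) elements of gens *)
Definition pow_span (gens : seq A) (n : nat) : seq A :=
  flatten [seq prods gens k | k <- iota 0 n].

Definition GKdim (gens : seq A) : \bar R :=
  limn_esup (fun n : nat =>
    ((ln ((dimspan (pow_span gens n))%:R : R)) / ln (n%:R : R))%:E).

Definition grdim (filt : nat -> seq A) (n : nat) : nat :=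
  (dimspan (filt n) - (if n is n'.+1 then dimspan (filt n') else 0))%N.

Definition h_alg (filt : nat -> seq A) : \bar R :=
  if `[< fin_dim A >] then 0
  else limn_esup (fun n : nat =>
    if grdim filt n == 0%N then -oo
    else ((ln ((grdim filt n)%:R : R)) / (n%:R : R))%:E).

Definition class0 : Prop := fin_dim A.
Definition class1 (filt : nat -> seq A) : Prop :=
  ~ fin_dim A /\ GKdim (filt 1%N) < +oo.
Definition class2 (filt : nat -> seq A) : Prop :=
  GKdim (filt 1%N) = +oo /\ h_alg filt < +oo.

Definition exactly_one (P Q S : Prop) : Prop :=
  (P /\ ~ Q /\ ~ S) \/ (~ P /\ Q /\ ~ S) \/ (~ P /\ ~ Q /\ S).

Definition classified (filt : nat -> seq A) : Prop :=
  exactly_one class0 (class1 filt) (class2 filt) /\ h_alg filt < +oo.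

End Growth.

Section Graph.
Variables (V Ed : finType) (s r : Ed -> V).

(* a path is a pair (v, [e1;...;en]) starting at v; n = 0 gives the vertex v *)
Fixpoint is_walk (v : V) (w : seq Ed) : bool :=
  if w is e :: w' then (s e == v) && is_walk (r e) w' else true.

Definition is_path (p : V * seq Ed) : bool := is_walk p.1 p.2.

Definition path_end (p : V * seq Ed) : V := last p.1 (map r p.2).

Fixpoint words (n : nat) : seq (seq Ed) :=
  if n is n'.+1 then [seq e :: w | e <- enum Ed, w <- words n'] else [:: [::]].

Definition paths_of_len (k : nat) : seq (V * seq Ed) :=
  [seq p <- [seq (v, w) | v <- enum V, w <- words k] | is_path p].

Definition paths_le (n : nat) : seq (V * seq Ed) :=
  flatten [seq paths_of_len k | k <- iota 0 n.+1].

Section PathAlg.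
Variables (K : fieldType) (A : lmodType K) (mul : A -> A -> A)
          (pa : V * seq Ed -> A).

Definition is_path_algebra : Prop :=
  [/\ is_alg mul,
      forall ps : seq (V * seq Ed), uniq ps -> all is_path ps -> free_seq (map pa ps),
      forall a : A, exists ps, all is_path ps /\ in_span (map pa ps) a
    & forall p q, is_path p -> is_path q ->
        mul (pa p) (pa q) = if path_end p == q.1 then pa (p.1, p.2 ++ q.2) else 0].

Definition KE_filt (n : nat) : seq A := map pa (paths_le n).
End PathAlg.

Definition lpa_rels (K : fieldType) (B : lmodType K) (mulB : B -> B -> B)
  (vb : V -> B) (eb gb : Ed -> B) : Prop :=
  [/\ forall v w, mulB (vb v) (vb w) = if v == w then vb v else 0,
      forall e, mulB (vb (s e)) (eb e) = eb e /\ mulB (eb e) (vb (r e)) = eb e,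
      forall e, mulB (vb (r e)) (gb e) = gb e /\ mulB (gb e) (vb (s e)) = gb e,
      forall e f, mulB (gb e) (eb f) = if e == f then vb (r e) else 0
    & forall v, (exists e, s e = v) ->
        \sum_(e | s e == v) mulB (eb e) (gb e) = vb v].

Section Leavitt.
Variables (K : fieldType) (A : lmodType K) (mul : A -> A -> A)
          (vert : V -> A) (ed gh : Ed -> A).

Definition is_leavitt : Prop :=
  [/\ is_alg mul, lpa_rels mul vert ed gh
    & forall (B : lmodType K) (mulB : B -> B -> B) (vb : V -> B) (eb gb : Ed -> B),
        is_alg mulB -> lpa_rels mulB vb eb gb ->
        (exists f : A -> B, [/\ alg_hom mul mulB f, forall v, f (vert v) = vb v,
                               forall e, f (ed e) = eb e & forall e, f (gh e) = gb e])
        /\ (forall f g : A -> B, alg_hom mul mulB f -> alg_hom mul mulB g ->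
              (forall v, f (vert v) = g (vert v)) -> (forall e, f (ed e) = g (ed e)) ->
              (forall e, f (gh e) = g (gh e)) -> forall x, f x = g x)].

Definition lpath (p : V * seq Ed) : A := mprod mul (vert p.1) (map ed p.2).
Definition lghost (p : V * seq Ed) : A := mprod mul (vert p.1) (map gh (rev p.2)).

(* standard filtration: W_n = span of lambda mu^* with l(lambda)+l(mu) <= n *)
Definition LPA_filt (n : nat) : seq A :=
  [seq mul (lpath lm.1) (lghost lm.2)
  | lm <- [seq (l, m) | l <- paths_le n, m <- paths_le n]
  & (size lm.1.2 + size lm.2.2 <= n)%N].
End Leavitt.

End Graph.

(* So dim(V_n/V_{n-1}) <= P^n
   for a constant P, and h_alg <= log P.  The trichotomy is a case split on
   finite-dimensionality and on GKdim = +oo; a finite-dimensional algebra has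
   finite GKdim because dim V^n stays below the dimension of the algebra. *)

From HB Require Import structures.
From mathcomp Require Import all_boot all_order all_algebra.
From mathcomp Require Import boolp reals ereal normedtype exp sequences.
Import Order.TTheory GRing.Theory Num.Theory.
Local Open Scope ring_scope.

Section LinearAlgebra.
Variables (K : fieldType) (A : lmodType K).

Lemma dimspan_le_size (l : seq A) : (dimspan l <= size l)%N.
Proof. by apply/bigmax_leqP => i _; rewrite -ltnS. Qed.

(* Steinitz: when [size l < size t], a nonzero vector in the left kernel of the
   coefficient matrix of [t] over [l] is a linear dependence among [t]. *)
Lemma free_seq_size_le_span (l t : seq A) :
  free_seq t -> (forall j, (j < size t)%N -> in_span l t`_j) ->
  (size t <= size l)%N.
Proof.
move=> free_t t_in_l; rewrite leqNgt; apply/negP => lt_l_t.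
have [c tE] := choice (fun j : 'I_(size t) => t_in_l j (ltn_ord j)).
pose C : 'M[K]_(size t, size l) := \matrix_(j, i) c j i.
have /rowV0Pn[x /sub_kermxP xC x_neq0] : kermx C != 0.
  rewrite kermx_eq0 /row_free; apply: contraTneq lt_l_t => <-.
  by rewrite -leqNgt rank_leq_col.
pose d k := oapp (fun j : 'I_(size t) => x 0 j) 0 (insub k).
have dE (j : 'I_(size t)) : d j = x 0 j by rewrite /d valK.
have : \sum_(j < size t) d j *: t`_j = 0.
  under eq_bigr => j _ do rewrite dE tE scaler_sumr.
  rewrite exchange_big /=; apply: big1 => i _.
  under eq_bigr => j _ do rewrite scalerA.
  rewrite -scaler_suml.
  have -> : \sum_(j < size t) x 0 j * c j i = (x *m C) 0 i.
    by rewrite mxE; apply: eq_bigr => j _; rewrite mxE.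
  by rewrite xC mxE scale0r.
move/free_t => d0; apply/negP: x_neq0; apply/negPn/eqP/rowP => j.
by rewrite mxE -dE d0.
Qed.

Lemma dimspan_le_spanning (l0 l : seq A) :
  (forall a, in_span l0 a) -> (dimspan l <= size l0)%N.
Proof.
move=> l0_spans; apply/bigmax_leqP => d /asboolP[t [_ [<- free_t]]].
by apply: free_seq_size_le_span free_t _ => j _; apply: l0_spans.
Qed.

End LinearAlgebra.

Definition exp_bounded {T : Type} (f : nat -> seq T) : Prop :=
  exists P : nat, forall n, (0 < n)%N -> (size (f n) <= P ^ n)%N.

Section Growth.
Variable R : realType.

Lemma limn_esup_lt_pinfty (u : (\bar R)^nat) (C : R) (N : nat) :
  (forall n, (N <= n)%N -> (u n <= C%:E)%E) -> (limn_esup u < +oo)%E.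
Proof.
move=> uC; rewrite limn_esup_lim; apply: (@le_lt_trans _ _ C%:E); last exact: ltry.
apply: lime_le; first exact: is_cvg_esups.
exists N => // m /= Nm; apply: ge_ereal_sup => _ [k /= mk <-]; apply: uC.
exact: leq_trans mk.
Qed.

Lemma ln_natr_ge0 (n : nat) : 0 <= ln (n%:R : R).
Proof. by case: n => [|n]; [rewrite ln0 | rewrite ln_ge0 // ler1n]. Qed.

Lemma ln_natr_le (n : nat) : ln (n%:R : R) <= n%:R.
Proof. by case: n => [|n]; [rewrite ln0 | rewrite ltW // ln_sublinear]. Qed.

Lemma ler_ln_natr (m n : nat) :
  (0 < m)%N -> (m <= n)%N -> ln (m%:R : R) <= ln (n%:R : R).
Proof. by move=> m_gt0 mn; rewrite ler_ln ?posrE ?ltr0n ?ler_nat // (leq_trans m_gt0). Qed.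

Variables (K : fieldType) (A : lmodType K).

Lemma h_alg_lt_pinfty (filt : nat -> seq A) :
  exp_bounded filt -> (h_alg R filt < +oo)%E.
Proof.
move=> [P filtP]; rewrite /h_alg; case: asboolP => _; first exact: ltry.
apply: (@limn_esup_lt_pinfty _ (ln (P%:R : R)) 1) => n n_gt0.
case: eqP => [_|/eqP g_neq0]; first exact: leNye.
have gP : (grdim filt n <= P ^ n)%N.
  apply: leq_trans (filtP n n_gt0); rewrite (leq_trans (leq_subr _ _)) //.
  exact: dimspan_le_size.
have Pn_gt0 : (0 < P ^ n)%N by apply: leq_trans gP; rewrite lt0n.
have P_gt0 : (0 < P)%N by case: P Pn_gt0 {filtP gP} => //; rewrite exp0n.
rewrite lee_fin ler_pdivrMr ?ltr0n // mulr_natr -lnXn ?ltr0n // -natrX.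
by apply: ler_ln_natr; rewrite ?lt0n.
Qed.

Lemma GKdim_lt_pinfty (mul : A -> A -> A) (gens : seq A) :
  fin_dim A -> (GKdim R mul gens < +oo)%E.
Proof.
move=> [l0 l0_spans]; set D := size l0.
apply: (@limn_esup_lt_pinfty _ (D%:R / ln (2%:R : R)) 2) => n n_ge2.
rewrite lee_fin; set d := dimspan _.
have ln2_gt0 : 0 < ln (2%:R : R) by rewrite ln_gt0 // ltr1n.
have ln2_le : ln (2%:R : R) <= ln (n%:R : R) by apply: ler_ln_natr.
apply: (@le_trans _ _ (ln (d%:R : R) / ln (2%:R : R))).
  by rewrite ler_wpM2l ?ln_natr_ge0 // lef_pV2 ?posrE // (lt_le_trans ln2_gt0).
rewrite ler_wpM2r ?invr_ge0 ?(ltW ln2_gt0) // (le_trans (ln_natr_le _)) // ler_nat.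
exact: dimspan_le_spanning.
Qed.

Lemma classified_exp_bounded (mul : A -> A -> A) (filt : nat -> seq A) :
  exp_bounded filt -> classified R mul filt.
Proof.
move=> /h_alg_lt_pinfty h_fin; split=> //.
rewrite /exactly_one /class0 /class1 /class2.
have [fd|nfd] := pselect (fin_dim A).
  left; split=> //; split; first by case.
  by case=> GK _; move: (GKdim_lt_pinfty mul (filt 1%N) fd); rewrite GK ltxx.
right; have [GK|GK] := eqVneq (GKdim R mul (filt 1%N)) +oo%E.
  by right; split=> //; split=> //; case=> _; rewrite GK ltxx.
left; split=> //; split; first by rewrite ltey.
by case=> GK'; rewrite GK' eqxx in GK.
Qed.

End Growth.

Section PathCounting.
Variables (V Ed : finType) (s r : Ed -> V).

Lemma size_words k : size (words Ed k) = (#|Ed| ^ k)%N.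
Proof. by elim: k => [|k IH] //=; rewrite size_allpairs IH -cardE expnS. Qed.

Lemma size_paths_of_len k : (size (paths_of_len s r k) <= #|V| * #|Ed| ^ k)%N.
Proof.
rewrite size_filter (leq_trans (count_size _ _)) //.
by rewrite size_allpairs size_words -cardE.
Qed.

Lemma size_paths_le n : (size (paths_le s r n) <= n.+1 * (#|V| * #|Ed|.+1 ^ n))%N.
Proof.
rewrite size_flatten sumnE /shape -map_comp big_map big_seq.
apply: (@leq_trans (\sum_(k <- iota 0 n.+1 | k \in iota 0 n.+1) (#|V| * #|Ed|.+1 ^ n))).
  apply: leq_sum => k; rewrite mem_iota add0n ltnS => kn /=.
  rewrite (leq_trans (size_paths_of_len k)) // leq_mul2l.
  apply/orP; right; apply: (@leq_trans (#|Ed|.+1 ^ k)); last exact: leq_pexp2l.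
  by case: k {kn} => // k; rewrite leq_exp2r.
by rewrite -big_seq big_const_seq count_predT size_iota iter_addn_0 mulnC.
Qed.

Lemma exp_bounded_paths_le : exp_bounded (paths_le s r).
Proof.
exists (2 * #|V|.+1 * #|Ed|.+1)%N => n n_gt0.
rewrite (leq_trans (size_paths_le n)) // mulnA !expnMn leq_mul2r.
apply/orP; right; apply: leq_mul; first exact: ltn_expl.
by rewrite (leq_trans (leqnSn _)) // -{1}(expn1 #|V|.+1) leq_pexp2l.
Qed.

Lemma exp_bounded_KE_filt (K : fieldType) (A : lmodType K) (pa : V * seq Ed -> A) :
  exp_bounded (KE_filt s r pa).
Proof.
by have [P pathsP] := exp_bounded_paths_le; exists P => n /pathsP; rewrite size_map.
Qed.

Lemma exp_bounded_LPA_filt (K : fieldType) (A : lmodType K) (mul : A -> A -> A)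
    (vert : V -> A) (ed gh : Ed -> A) :
  exp_bounded (LPA_filt s r mul vert ed gh).
Proof.
have [P pathsP] := exp_bounded_paths_le; exists (P * P)%N => n n_gt0.
rewrite size_map size_filter (leq_trans (count_size _ _)) //.
by rewrite size_allpairs expnMn leq_mul ?pathsP.
Qed.

End PathCounting.

Theorem theorem5p16 (R : realType) (K : fieldType) (V Ed : finType) (s r : Ed -> V) :
  (forall (A : lmodType K) (mul : A -> A -> A) (pa : V * seq Ed -> A),
      is_path_algebra s r mul pa -> classified R mul (KE_filt s r pa)) /\
  (forall (A : lmodType K) (mul : A -> A -> A) (vert : V -> A) (ed gh : Ed -> A),
      is_leavitt s r mul vert ed gh -> classified R mul (LPA_filt s r mul vert ed gh)).
Proof.
split=> [A mul pa _ | A mul vert ed gh _]; apply: classified_exp_bounded.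
  exact: exp_bounded_KE_filt.
exact: exp_bounded_LPA_filt.
Qed.
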